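(* Let $m \ge 2$ and $n \ge 2m-1$ be integers. Then for every real $r$ with $|r|<1$, $$\int_{-1}^1 \frac{U_n(s)(1-s^2)^{m-\frac{1}{2}}}{(s-r)^2}\,ds = \pi(-1)^{m}\left(\frac{1}{2}\right)^{2m-2}\sum_{j=0}^{2m-2}(-1)^j\binom{2m-2}{j}(n+3-2m+2j)\,U_{n+2-2m+2j}(r),$$ where the integral is a Hadamard finite-part integral.
   Context: $U_k(s)=\frac{\sin((k+1)\cos^{-1}s)}{\sin(\cos^{-1}s)}$ is the Tchebyshev polynomial of the second kind. For a positive integer $\alpha\ge 2$ and $|r|<1$, the integral $\int_{-1}^1 \frac{D(s)}{(s-r)^\alpha}ds$ is understood in the Hadamard finite-part sense; in particular it satisfies $\int_{-1}^1 \frac{D(s)}{(s-r)^{\alpha}}ds=\frac{1}{\alpha-1}\frac{d}{dr}\int_{-1}^1\frac{D(s)}{(s-r)^{\alpha-1}}ds$, where for $\alpha-1=1$ the right-hand integral is a Cauchy principal value. $\binom{a}{j}=\frac{a!}{j!(a-j)!}$. *)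

From Stdlib Require Import Reals Lra.
From Coquelicot Require Import Coquelicot.
Open Scope R_scope.

Definition chebU (k : nat) (s : R) : R :=
  sin (INR (k + 1) * acos s) / sin (acos s).

Definition is_PV (D : R -> R) (r l : R) : Prop :=
  filterlim
    (fun eps => RInt (fun s => D s / (s - r)) (-1) (r - eps)
              + RInt (fun s => D s / (s - r)) (r + eps) 1)
    (at_right 0) (locally l).

(* Hadamard finite part of order 2:
   f.p. int_{-1}^1 D(s)/(s - r)^2 ds = d/dr PV int_{-1}^1 D(s)/(s - r) ds *)
Definition is_HFP2 (D : R -> R) (r l : R) : Prop :=
  exists P : R -> R,
    (forall x, -1 < x < 1 -> is_PV D x (P x)) /\ is_derive P r l.

(* With [s = cos t] the integrand is [sin ((n + 1) t) sin^(2m-2) t], which the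
   product-to-sum formula expands into a combination of [sin (K t)] with
   [K = n + 3 - 2m + 2j >= 2].  As a function of [s], [sin (K acos s)] has principal
   value [- PI T_K(x)], where [T_K(cos t) = cos (K t)]: for [K = 1] by an explicit
   antiderivative, and in general by the recurrence
   [sin ((K + 2) t) = 2 cos t sin ((K + 1) t) - sin (K t)] together with
   [PV int s f(s) / (s - x) = int f + x PV int f(s) / (s - x)].  The finite part is the
   derivative of the principal value, and [T_K' = K U_(K-1)]. *)

From Stdlib Require Import Reals Lra Lia.
From Coquelicot Require Import Coquelicot.
Open Scope R_scope.

Lemma sin_acos_sqrt (x : R) : -1 <= x <= 1 -> sin (acos x) = sqrt (1 - x ^ 2).
Proof. intros Hx. rewrite sin_acos by lra. unfold Rsqr. f_equal. ring. Qed.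

Lemma sin_acos_pos (x : R) : -1 < x < 1 -> 0 < sin (acos x).
Proof. intros Hx. pose proof (acos_bound_lt x Hx). apply sin_gt_0; lra. Qed.

Lemma acos_m1 : acos (-1) = PI.
Proof. unfold acos. destruct (Rle_dec (-1) (-1)); [reflexivity | lra]. Qed.

Lemma is_derive_acos (x : R) : -1 < x < 1 -> is_derive acos x (-1 / sqrt (1 - x ^ 2)).
Proof.
  intros Hx. apply is_derive_Reals.
  replace (1 - x ^ 2) with (1 - x²) by (unfold Rsqr; ring).
  rewrite <- (derive_pt_acos x Hx).
  destruct (derivable_pt_acos x Hx) as [l Hl]. exact Hl.
Qed.

Lemma continuous_acos_1 : continuous acos 1.
Proof.
  apply filterlim_locally. intros eps.
  set (e := Rmin eps (PI / 2)).
  assert (He : 0 < e <= PI / 2).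
  { pose proof (cond_pos eps). pose proof PI_RGT_0.
    split; [apply Rmin_glb_lt; lra | apply Rmin_r]. }
  assert (Hcos : cos e < 1).
  { rewrite <- cos_0. apply cos_decreasing_1; pose proof PI_RGT_0; lra. }
  assert (Hd : 0 < 1 - cos e) by lra.
  exists (mkposreal _ Hd). intros y Hy.
  change (Rabs (y - 1) < 1 - cos e) in Hy. apply Rabs_lt_between in Hy.
  change (Rabs (acos y - acos 1) < eps). rewrite acos_1, Rminus_0_r.
  assert (e <= eps) by apply Rmin_l.
  destruct (Rle_dec 1 y) as [Hy1 | Hy1].
  - unfold acos. destruct (Rle_dec y (-1)); [lra|].
    destruct (Rle_dec 1 y); [|lra]. rewrite Rabs_R0. lra.
  - pose proof (acos_bound y) as Hb. pose proof (COS_bound e).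
    (* [acos y >= e] would give [y = cos (acos y) <= cos e] *)
    assert (acos y < e).
    { destruct (Rlt_le_dec (acos y) e) as [h | h]; [exact h|].
      assert (Hc : cos (acos y) <= cos e) by (apply cos_decr_1; pose proof PI_RGT_0; lra).
      rewrite cos_acos in Hc by lra. lra. }
    rewrite Rabs_pos_eq by lra. lra.
Qed.

Lemma continuous_acos (x : R) : continuous acos x.
Proof.
  destruct (Rlt_le_dec x 1) as [h1 | h1]; destruct (Rlt_le_dec (-1) x) as [h2 | h2].
  - apply (@ex_derive_continuous R_AbsRing R_NormedModule).
    eexists. apply is_derive_acos. lra.
  - destruct h2 as [h2 | ->].
    + apply continuous_ext_loc with (fun _ => PI); [|apply continuous_const].
      apply locally_interval with m_infty (-1); simpl; auto.
      intros y _ Hy. unfold acos. destruct (Rle_dec y (-1)); [reflexivity | lra].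
    + apply continuous_ext with (fun y => PI - acos (- y)).
      { intros y. rewrite acos_opp. lra. }
      apply (continuous_minus (fun _ => PI) (fun y => acos (- y))); [apply continuous_const|].
      apply continuous_comp.
      { apply (@ex_derive_continuous R_AbsRing R_NormedModule). auto_derive; auto. }
      replace (- -1) with 1 by ring. apply continuous_acos_1.
  - destruct h1 as [h1 | <-]; [|apply continuous_acos_1].
    apply continuous_ext_loc with (fun _ => 0); [|apply continuous_const].
    apply locally_interval with 1 p_infty; simpl; auto.
    intros y Hy _. unfold acos. destruct (Rle_dec y (-1)); [lra|].
    destruct (Rle_dec 1 y); [reflexivity | lra].
  - lra.
Qed.

Lemma is_derive_acos_sin (t : R) : -1 < t < 1 -> is_derive acos t (-1 / sin (acos t)).
Proof. intros Ht. rewrite sin_acos_sqrt by lra. apply is_derive_acos, Ht. Qed.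

Lemma is_derive_sin_scal_acos (a t : R) : -1 < t < 1 ->
  is_derive (fun s => sin (a * acos s)) t (- a * cos (a * acos t) / sin (acos t)).
Proof.
  intros Ht. pose proof (sin_acos_pos t Ht).
  replace (- a * cos (a * acos t) / sin (acos t))
    with (scal (a * (-1 / sin (acos t))) (cos (a * acos t)))
    by (unfold scal; simpl; unfold mult; simpl; field; lra).
  apply (is_derive_comp sin (fun s => a * acos s)); [apply is_derive_sin|].
  apply is_derive_scal, is_derive_acos_sin, Ht.
Qed.

Lemma is_derive_cos_scal_acos (a t : R) : -1 < t < 1 ->
  is_derive (fun s => cos (a * acos s)) t (a * sin (a * acos t) / sin (acos t)).
Proof.
  intros Ht. pose proof (sin_acos_pos t Ht).
  replace (a * sin (a * acos t) / sin (acos t))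
    with (scal (a * (-1 / sin (acos t))) (- sin (a * acos t)))
    by (unfold scal; simpl; unfold mult; simpl; field; lra).
  apply (is_derive_comp cos (fun s => a * acos s)); [apply is_derive_cos|].
  apply is_derive_scal, is_derive_acos_sin, Ht.
Qed.

Lemma continuous_sin_scal_acos (a s : R) : continuous (fun s => sin (a * acos s)) s.
Proof. apply continuous_sin_comp, (continuous_scal_r a acos), continuous_acos. Qed.

Lemma ex_RInt_continuous_between (f : R -> R) (a b lo hi : R) :
  lo < a < hi -> lo < b < hi -> (forall z, lo < z < hi -> continuous f z) ->
  ex_RInt f a b.
Proof.
  intros Ha Hb Hf. apply (@ex_RInt_continuous R_CompleteNormedModule).
  intros z Hz. apply Hf. unfold Rmin, Rmax in Hz. destruct (Rle_dec a b); lra.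
Qed.

Lemma is_RInt_derive_interior (F f : R -> R) (a b lo hi : R) :
  lo < a < b -> b < hi ->
  (forall z, lo < z < hi -> continuous f z) ->
  (forall t, a < t < b -> is_derive F t (f t)) ->
  continuous F a -> continuous F b ->
  is_RInt f a b (F b - F a).
Proof.
  intros Hab Hb Hf HF HFa HFb.
  assert (HI : forall x, lo < x < hi -> is_derive (fun t => RInt f a t) x (f x)).
  { intros x Hx. apply is_derive_RInt with a; [|apply Hf, Hx].
    apply locally_interval with lo hi; simpl; try tauto.
    intros z Hz1 Hz2. apply (@RInt_correct R_CompleteNormedModule).
    apply ex_RInt_continuous_between with lo hi; auto; lra. }
  destruct (MVT_gen (fun t => RInt f a t - F t) a b (fun _ => 0)) as [c [_ Hc]].
  - rewrite Rmin_left, Rmax_right by lra. intros x Hx.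
    replace 0 with (f x - f x) by ring.
    apply (is_derive_minus (fun t => RInt f a t) F); [apply HI; lra | apply HF, Hx].
  - rewrite Rmin_left, Rmax_right by lra. intros x Hx.
    apply continuity_pt_filterlim.
    apply (continuous_minus (fun t => RInt f a t) F).
    + apply (@ex_derive_continuous R_AbsRing R_NormedModule).
      eexists. apply HI. lra.
    + destruct (Req_dec x a) as [-> | ]; [exact HFa|].
      destruct (Req_dec x b) as [-> | ]; [exact HFb|].
      apply (@ex_derive_continuous R_AbsRing R_NormedModule).
      eexists. apply HF. lra.
  - rewrite RInt_point in Hc. change (zero : R) with 0 in Hc.
    replace (F b - F a) with (RInt f a b) by lra.
    apply (@RInt_correct R_CompleteNormedModule).
    apply ex_RInt_continuous_between with lo hi; auto; lra.
Qed.

Lemma filterlim_Rplus {T : Type} {F : (T -> Prop) -> Prop} {FF : Filter F}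
  (u v : T -> R) (a b : R) :
  filterlim u F (locally a) -> filterlim v F (locally b) ->
  filterlim (fun e => u e + v e) F (locally (a + b)).
Proof.
  intros Hu Hv. eapply filterlim_comp_2; [exact Hu | exact Hv |].
  apply (@filterlim_plus R_AbsRing R_NormedModule).
Qed.

Lemma filterlim_Rmult_l {T : Type} {F : (T -> Prop) -> Prop} {FF : Filter F}
  (u : T -> R) (k a : R) :
  filterlim u F (locally a) -> filterlim (fun e => k * u e) F (locally (k * a)).
Proof.
  intros Hu. eapply filterlim_comp; [exact Hu |].
  apply (@filterlim_scal_r R_AbsRing R_NormedModule).
Qed.

Lemma continuous_at_right_0 (phi : R -> R) :
  continuous phi 0 -> filterlim phi (at_right 0) (locally (phi 0)).
Proof. intros H P HP. destruct (H P HP) as [d Hd]. exists d. intros y Hy _. apply Hd, Hy. Qed.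

Lemma at_right_0_PV_window (x : R) : -1 < x < 1 ->
  at_right 0 (fun e => 0 < e /\ -1 < x - e /\ x + e < 1).
Proof.
  intros Hx. set (d := Rmin (1 - x) (1 + x)).
  assert (d <= 1 - x /\ d <= 1 + x) by (split; [apply Rmin_l | apply Rmin_r]).
  apply locally_interval with (- d) d; simpl.
  - enough (0 < d) by lra. apply Rmin_glb_lt; lra.
  - apply Rmin_glb_lt; lra.
  - intros y _ Hy Hy0. repeat split; lra.
Qed.

Lemma continuous_div_sub (D : R -> R) (x z : R) :
  continuous D z -> z <> x -> continuous (fun s => D s / (s - x)) z.
Proof.
  intros HD Hz. apply (continuous_mult D (fun s => / (s - x))); [exact HD|].
  apply continuous_Rinv_comp; [|lra].
  apply (@ex_derive_continuous R_AbsRing R_NormedModule). auto_derive. auto.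
Qed.

Lemma ex_RInt_div_sub (D : R -> R) (x a b : R) :
  (forall s, continuous D s) -> x < Rmin a b \/ Rmax a b < x ->
  ex_RInt (fun s => D s / (s - x)) a b.
Proof.
  intros HD Hx. apply (@ex_RInt_continuous R_CompleteNormedModule).
  intros z Hz. apply continuous_div_sub; [apply HD | lra].
Qed.

Lemma ex_RInt_PV_left (D : R -> R) (x e : R) :
  (forall s, continuous D s) -> -1 < x -> 0 < e ->
  ex_RInt (fun s => D s / (s - x)) (-1) (x - e).
Proof.
  intros HD Hx He. apply ex_RInt_div_sub; [exact HD|]. right.
  unfold Rmax. destruct Rle_dec; lra.
Qed.

Lemma ex_RInt_PV_right (D : R -> R) (x e : R) :
  (forall s, continuous D s) -> x < 1 -> 0 < e ->
  ex_RInt (fun s => D s / (s - x)) (x + e) 1.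
Proof.
  intros HD Hx He. apply ex_RInt_div_sub; [exact HD|]. left.
  unfold Rmin. destruct Rle_dec; lra.
Qed.

Lemma is_PV_ext (D1 D2 : R -> R) (x l : R) : -1 < x < 1 ->
  (forall s, -1 < s < 1 -> D1 s = D2 s) -> is_PV D1 x l -> is_PV D2 x l.
Proof.
  intros Hx HD. apply filterlim_ext_loc.
  eapply filter_imp; [|apply (at_right_0_PV_window x Hx)].
  intros e He. f_equal; apply RInt_ext; intros s Hs; rewrite HD; try reflexivity;
    rewrite Rmin_left, Rmax_right in Hs; lra.
Qed.

Lemma is_PV_scal (D : R -> R) (x k l : R) : -1 < x < 1 -> (forall s, continuous D s) ->
  is_PV D x l -> is_PV (fun s => k * D s) x (k * l).
Proof.
  intros Hx HD HPV. apply filterlim_ext_loc with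
    (fun e => k * (RInt (fun s => D s / (s - x)) (-1) (x - e)
                   + RInt (fun s => D s / (s - x)) (x + e) 1)).
  - eapply filter_imp; [|apply (at_right_0_PV_window x Hx)]. intros e [He _].
    rewrite !(RInt_ext (fun s => k * D s / (s - x)) (fun s => scal k (D s / (s - x))))
      by (intros; unfold scal; simpl; unfold mult; simpl; unfold Rdiv; ring).
    rewrite !(@RInt_scal R_CompleteNormedModule)
      by ((apply ex_RInt_PV_left || apply ex_RInt_PV_right); auto; lra).
    unfold scal; simpl; unfold mult; simpl. ring.
  - apply filterlim_Rmult_l, HPV.
Qed.

Lemma is_PV_plus (D1 D2 : R -> R) (x l1 l2 : R) : -1 < x < 1 ->
  (forall s, continuous D1 s) -> (forall s, continuous D2 s) ->
  is_PV D1 x l1 -> is_PV D2 x l2 -> is_PV (fun s => D1 s + D2 s) x (l1 + l2).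
Proof.
  intros Hx HD1 HD2 HPV1 HPV2.
  eapply filterlim_ext_loc; [|exact (filterlim_Rplus _ _ _ _ HPV1 HPV2)].
  eapply filter_imp; [|apply (at_right_0_PV_window x Hx)]. intros e [He _].
  rewrite !(RInt_ext (fun s => (D1 s + D2 s) / (s - x))
                     (fun s => plus (D1 s / (s - x)) (D2 s / (s - x))))
    by (intros; unfold plus; simpl; unfold Rdiv; ring).
  rewrite !(@RInt_plus R_CompleteNormedModule)
    by ((apply ex_RInt_PV_left || apply ex_RInt_PV_right); auto; lra).
  unfold plus; simpl. ring.
Qed.

Lemma continuous_sum_f_R0 (F : nat -> R -> R) (N : nat) (s : R) :
  (forall j, continuous (F j) s) -> continuous (fun x => sum_f_R0 (fun j => F j x) N) s.
Proof.
  intros HF. induction N as [|N IH]; [apply HF|].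
  apply (continuous_plus (fun x => sum_f_R0 (fun j => F j x) N) (F (S N))); auto.
Qed.

Lemma is_PV_sum (F : nat -> R -> R) (L : nat -> R) (N : nat) (x : R) : -1 < x < 1 ->
  (forall j s, continuous (F j) s) ->
  (forall j, (j <= N)%nat -> is_PV (F j) x (L j)) ->
  is_PV (fun s => sum_f_R0 (fun j => F j s) N) x (sum_f_R0 L N).
Proof.
  intros Hx HF HL. induction N as [|N IH]; [apply HL; lia|].
  apply is_PV_plus; [exact Hx | | apply HF | | apply HL; lia].
  - intros s. apply continuous_sum_f_R0. intros j. apply HF.
  - apply IH. intros j Hj. apply HL. lia.
Qed.

Lemma RInt_punctured_limit (f : R -> R) (x : R) : (forall s, continuous f s) ->
  filterlim (fun e => RInt f (-1) (x - e) + RInt f (x + e) 1) (at_right 0)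
    (locally (RInt f (-1) 1)).
Proof.
  intros Hf.
  assert (Hint : forall a b, ex_RInt f a b)
    by (intros; apply (@ex_RInt_continuous R_CompleteNormedModule); auto).
  assert (HRInt : forall a z, continuous (fun t => RInt f a t) z).
  { intros a z. apply (continuous_RInt_1 f a z).
    apply filter_forall. intros t. apply (@RInt_correct R_CompleteNormedModule), Hint. }
  set (phi := fun e => RInt f (-1) (x - e) + RInt f (x + e) 1).
  replace (RInt f (-1) 1) with (phi 0).
  2:{ unfold phi. rewrite Rminus_0_r, Rplus_0_r.
      rewrite <- (RInt_Chasles f (-1) x 1) by apply Hint. reflexivity. }
  apply continuous_at_right_0. unfold phi.
  apply (continuous_plus (fun e => RInt f (-1) (x - e)) (fun e => RInt f (x + e) 1)).
  - apply (continuous_comp (fun e => x - e) (fun t => RInt f (-1) t)); [|apply HRInt].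
    apply (@ex_derive_continuous R_AbsRing R_NormedModule). auto_derive. auto.
  - apply continuous_ext with (fun e => - RInt f 1 (x + e)).
    { intros e. rewrite <- (opp_RInt_swap f 1 (x + e)); [reflexivity | apply Hint]. }
    apply (continuous_opp (fun e => RInt f 1 (x + e))).
    apply (continuous_comp (fun e => x + e) (fun t => RInt f 1 t)); [|apply HRInt].
    apply (@ex_derive_continuous R_AbsRing R_NormedModule). auto_derive. auto.
Qed.

(* [s f(s) / (s - x) = f(s) + x f(s) / (s - x)]: the first part has no singularity. *)
Lemma is_PV_mul_id (D : R -> R) (x l : R) : -1 < x < 1 -> (forall s, continuous D s) ->
  is_PV D x l -> is_PV (fun s => s * D s) x (RInt D (-1) 1 + x * l).
Proof.
  intros Hx HD HPV.
  assert (Hsplit : forall a b, (x < Rmin a b \/ Rmax a b < x) ->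
    RInt (fun s => s * D s / (s - x)) a b = RInt D a b + x * RInt (fun s => D s / (s - x)) a b).
  { intros a b Hab.
    assert (HDab : ex_RInt D a b)
      by (apply (@ex_RInt_continuous R_CompleteNormedModule); auto).
    assert (Hdiv : ex_RInt (fun s => D s / (s - x)) a b) by (apply ex_RInt_div_sub; auto).
    rewrite <- (@RInt_scal R_CompleteNormedModule _ _ _ _ Hdiv).
    rewrite <- (@RInt_plus R_CompleteNormedModule _ _ _ _ HDab (ex_RInt_scal _ _ _ _ Hdiv)).
    apply RInt_ext. intros s Hs.
    change (s * D s / (s - x) = D s + x * (D s / (s - x))).
    field. destruct Hab; lra. }
  eapply filterlim_ext_loc.
  2:{ apply filterlim_Rplus;
        [apply (RInt_punctured_limit D x HD) | apply filterlim_Rmult_l, HPV]. }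
  eapply filter_imp; [|apply (at_right_0_PV_window x Hx)]. intros e [He [H1 H2]].
  rewrite !Hsplit by (rewrite ?Rmin_left, ?Rmax_right by lra; lra). ring.
Qed.

Lemma continuous_sqrt_1_sub_sqr (s : R) : continuous (fun s => sqrt (1 - s ^ 2)) s.
Proof.
  apply continuous_sqrt_comp.
  apply (@ex_derive_continuous R_AbsRing R_NormedModule). auto_derive. auto.
Qed.

Lemma sqrt_PV_derivative_identity (x t w c : R) :
  0 < w -> w * w = 1 - t ^ 2 -> c * c = 1 - x ^ 2 ->
  0 < 1 - x * t + c * w -> t - x <> 0 ->
  - (t + x) / w - c * ((- x - c * t / w) / (1 - x * t + c * w)) + c / (t - x)
  = w / (t - x).
Proof.
  intros Hw Hww Hcc HN Htx.
  set (N := 1 - x * t + c * w) in *.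
  assert (K : (x * w + c * t) * (t - x) = (c - w) * N).
  { enough (E : (c - w) * N - (x * w + c * t) * (t - x)
                = w * (c * c - (1 - x ^ 2)) - c * (w * w - (1 - t ^ 2))).
    { rewrite Hcc, Hww in E. lra. }
    unfold N. ring. }
  transitivity ((- (t + x) * (t - x) * N + c * ((x * w + c * t) * (t - x)) + c * w * N)
                / (w * N * (t - x))).
  { field. lra. }
  rewrite K.
  replace (- (t + x) * (t - x) * N + c * ((c - w) * N) + c * w * N)
    with ((c * c + x ^ 2 - t ^ 2) * N) by ring.
  rewrite Hcc. replace (1 - x ^ 2 + x ^ 2 - t ^ 2) with (w * w) by lra.
  field. lra.
Qed.

Section SqrtPV.

Variable x : R.
Hypothesis Hx : -1 < x < 1.

Let c := sqrt (1 - x ^ 2).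
Let N (s : R) := 1 - x * s + c * sqrt (1 - s ^ 2).
Let Q (s : R) := sqrt (1 - s ^ 2) + x * acos s - c * ln (N s).
(* An antiderivative of [sqrt (1 - s^2) / (s - x)] on each side of [x], from
   [(1 - s^2) / (s - x) = - (s + x) + (1 - x^2) / (s - x)]. *)
Let F (s : R) := Q s + c / 2 * ln ((s - x) ^ 2).

Let N_pos (s : R) : -1 <= s <= 1 -> 0 < N s.
Proof.
  intros Hs. unfold N.
  assert (0 <= c * sqrt (1 - s ^ 2)) by (apply Rmult_le_pos; apply sqrt_pos).
  assert (x * s < 1).
  { destruct (Rlt_le_dec s 1).
    - assert (0 < (1 + x) * (1 - s)) by (apply Rmult_lt_0_compat; lra).
      assert (0 <= (1 - x) * (1 + s)) by (apply Rmult_le_pos; lra).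
      nra.
    - replace s with 1 by lra. lra. }
  lra.
Qed.

Let continuous_Q (s : R) : -1 <= s <= 1 -> continuous Q s.
Proof.
  intros Hs. unfold Q.
  apply (continuous_minus (fun s => sqrt (1 - s ^ 2) + x * acos s) (fun s => c * ln (N s))).
  - apply (continuous_plus (fun s => sqrt (1 - s ^ 2)) (fun s => x * acos s)).
    + apply continuous_sqrt_1_sub_sqr.
    + apply (continuous_scal_r x acos), continuous_acos.
  - apply (continuous_scal_r c (fun s => ln (N s))).
    apply (continuous_comp N ln); [|apply continuous_ln, N_pos, Hs].
    apply (continuous_plus (fun s => 1 - x * s) (fun s => c * sqrt (1 - s ^ 2))).
    + apply (@ex_derive_continuous R_AbsRing R_NormedModule). auto_derive. auto.
    + apply (continuous_scal_r c (fun s => sqrt (1 - s ^ 2))), continuous_sqrt_1_sub_sqr.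
Qed.

Let continuous_F (s : R) : -1 <= s <= 1 -> s <> x -> continuous F s.
Proof.
  intros Hs Hsx. apply (continuous_plus Q (fun s => c / 2 * ln ((s - x) ^ 2))).
  - apply continuous_Q, Hs.
  - apply (@ex_derive_continuous R_AbsRing R_NormedModule). auto_derive.
    apply pow2_gt_0. lra.
Qed.

Let is_derive_F (t : R) : -1 < t < 1 -> t <> x ->
  is_derive F t (sqrt (1 - t ^ 2) / (t - x)).
Proof.
  intros Ht Htx.
  assert (Hw : 0 < sqrt (1 - t ^ 2)) by (apply sqrt_lt_R0; nra).
  assert (HN : 0 < N t) by (apply N_pos; lra).
  unfold N in HN.
  set (w := sqrt (1 - t ^ 2)) in *.
  assert (E : w / (t - x) = (- t / w - c * ((- x - c * t / w) / (1 - x * t + c * w))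
                             + c / (t - x)) + x * (-1 / w)).
  { rewrite <- (sqrt_PV_derivative_identity x t w c); auto.
    - field. lra.
    - apply sqrt_sqrt. nra.
    - apply sqrt_sqrt. nra.
    - lra. }
  rewrite E.
  apply is_derive_ext with
    (fun s => (sqrt (1 - s ^ 2) - c * ln (N s) + c / 2 * ln ((s - x) ^ 2)) + x * acos s).
  { intros s. unfold F, Q. lra. }
  apply (is_derive_plus (fun s => sqrt (1 - s ^ 2) - c * ln (N s) + c / 2 * ln ((s - x) ^ 2))
                        (fun s => x * acos s)).
  - unfold N. auto_derive; replace (1 + - (t * (t * 1))) with (1 - t ^ 2) by ring; fold w.
    + assert (0 < (t - x) ^ 2) by (apply pow2_gt_0; lra).
      repeat split; try nra; lra.
    + field. repeat split; lra.
  - apply is_derive_scal, is_derive_acos, Ht.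
Qed.

Let F_1 : F 1 = 0.
Proof.
  unfold F, Q, N. rewrite acos_1.
  replace (1 - 1 ^ 2) with 0 by ring. rewrite sqrt_0.
  replace (1 - x * 1 + c * 0) with (1 - x) by ring.
  rewrite ln_pow by lra. simpl INR. field.
Qed.

Let F_m1 : F (-1) = x * PI.
Proof.
  unfold F, Q, N. rewrite acos_m1.
  replace (1 - (-1) ^ 2) with 0 by ring. rewrite sqrt_0.
  replace (1 - x * -1 + c * 0) with (1 + x) by ring.
  replace ((-1 - x) ^ 2) with ((1 + x) ^ 2) by ring.
  rewrite ln_pow by lra. simpl INR. field.
Qed.

Lemma is_PV_sqrt_1_sub_sqr : is_PV (fun s => sqrt (1 - s ^ 2)) x (- PI * x).
Proof.
  assert (Hlim : filterlim (fun e => Q (x - e) - Q (x + e) - x * PI) (at_right 0)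
                   (locally (- PI * x))).
  { replace (- PI * x) with (Q (x - 0) - Q (x + 0) - x * PI)
      by (rewrite Rminus_0_r, Rplus_0_r; ring).
    apply continuous_at_right_0.
    apply (continuous_minus (fun e => Q (x - e) - Q (x + e)) (fun _ => x * PI));
      [|apply continuous_const].
    apply (continuous_minus (fun e => Q (x - e)) (fun e => Q (x + e)));
      apply continuous_comp; try (apply continuous_Q; lra);
      apply (@ex_derive_continuous R_AbsRing R_NormedModule); auto_derive; auto. }
  eapply filterlim_ext_loc; [|exact Hlim].
  eapply filter_imp; [|apply (at_right_0_PV_window x Hx)]. intros e [He [H1 H2]].
  assert (Hcont : forall z, z <> x -> continuous (fun s => sqrt (1 - s ^ 2) / (s - x)) z)
    by (intros; apply continuous_div_sub; [apply continuous_sqrt_1_sub_sqr | assumption]).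
  rewrite (is_RInt_unique _ _ _ (F (x - e) - F (-1))).
  2:{ apply is_RInt_derive_interior with (-2) x; try lra.
      - intros z Hz. apply Hcont. lra.
      - intros t Ht. apply is_derive_F; lra.
      - apply continuous_F; lra.
      - apply continuous_F; lra. }
  rewrite (is_RInt_unique _ _ _ (F 1 - F (x + e))).
  2:{ apply is_RInt_derive_interior with x 2; try lra.
      - intros z Hz. apply Hcont. lra.
      - intros t Ht. apply is_derive_F; lra.
      - apply continuous_F; lra.
      - apply continuous_F; lra. }
  rewrite F_1, F_m1. unfold F.
  replace ((x - e - x) ^ 2) with ((x + e - x) ^ 2) by ring. ring.
Qed.

End SqrtPV.

Lemma sin_INR_mul_PI (n : nat) : sin (INR n * PI) = 0.
Proof. apply sin_eq_0_1. exists (Z.of_nat n). rewrite INR_IZR_INZ. reflexivity. Qed.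

(* [sin (K acos s) = sqrt (1 - s^2) U_(K-1)(s)]. *)
Definition sin_mul_acos (K : nat) (s : R) : R := sin (INR K * acos s).

Lemma continuous_sin_mul_acos (K : nat) (s : R) : continuous (sin_mul_acos K) s.
Proof. apply continuous_sin_scal_acos. Qed.

Lemma sin_mul_acos_SS (K : nat) (s : R) : -1 <= s <= 1 ->
  sin_mul_acos (S (S K)) s = 2 * (s * sin_mul_acos (S K) s) - sin_mul_acos K s.
Proof.
  intros Hs. unfold sin_mul_acos. set (t := acos s).
  replace (INR (S (S K)) * t) with (INR (S K) * t + t) by (rewrite (S_INR (S K)); ring).
  replace (INR K * t) with (INR (S K) * t - t) by (rewrite (S_INR K); ring).
  rewrite sin_plus, sin_minus. unfold t. rewrite cos_acos by lra. ring.
Qed.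

Lemma is_RInt_sin_mul_acos (K : nat) (G : R -> R) :
  (forall s, continuous G s) -> (forall t, -1 < t < 1 -> is_derive G t (sin_mul_acos K t)) ->
  is_RInt (sin_mul_acos K) (-1) 1 (G 1 - G (-1)).
Proof.
  intros HG HdG. apply is_RInt_derive_interior with (-2) 2; try lra; auto.
  intros z _. apply continuous_sin_mul_acos.
Qed.

Lemma is_derive_sin_acos_combination (a b p q t : R) : -1 < t < 1 ->
  is_derive (fun s => a * sin (p * acos s) - b * sin (q * acos s)) t
    ((b * q * cos (q * acos t) - a * p * cos (p * acos t)) / sin (acos t)).
Proof.
  intros Ht. pose proof (sin_acos_pos t Ht).
  assert (E : (b * q * cos (q * acos t) - a * p * cos (p * acos t)) / sin (acos t)
              = a * (- p * cos (p * acos t) / sin (acos t))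
                - b * (- q * cos (q * acos t) / sin (acos t)))
    by (field; lra).
  rewrite E.
  apply (is_derive_minus (fun s => a * sin (p * acos s)) (fun s => b * sin (q * acos s)));
    apply is_derive_scal, is_derive_sin_scal_acos, Ht.
Qed.

Lemma continuous_sin_acos_combination (a b p q s : R) :
  continuous (fun s => a * sin (p * acos s) - b * sin (q * acos s)) s.
Proof.
  apply (continuous_minus (fun s => a * sin (p * acos s)) (fun s => b * sin (q * acos s)));
    [apply (continuous_scal_r a (fun s => sin (p * acos s)))
    |apply (continuous_scal_r b (fun s => sin (q * acos s)))]; apply continuous_sin_scal_acos.
Qed.

Lemma RInt_sin_mul_acos_1 : RInt (sin_mul_acos 1) (-1) 1 = PI / 2.
Proof.
  set (G := fun s => 1 / 4 * sin (2 * acos s) - 1 / 2 * acos s).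
  apply is_RInt_unique. replace (PI / 2) with (G 1 - G (-1)).
  2:{ unfold G. rewrite acos_1, acos_m1, Rmult_0_r, sin_0, sin_2PI. lra. }
  apply is_RInt_sin_mul_acos.
  - intros s.
    apply (continuous_minus (fun s => 1 / 4 * sin (2 * acos s)) (fun s => 1 / 2 * acos s)).
    + apply (continuous_scal_r (1 / 4) (fun s => sin (2 * acos s))), continuous_sin_scal_acos.
    + apply (continuous_scal_r (1 / 2) acos), continuous_acos.
  - intros t Ht. pose proof (sin_acos_pos t Ht).
    assert (E : sin_mul_acos 1 t = 1 / 4 * (- 2 * cos (2 * acos t) / sin (acos t))
                                   - 1 / 2 * (-1 / sin (acos t))).
    { unfold sin_mul_acos. simpl INR. rewrite Rmult_1_l, cos_2a_sin. field. lra. }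
    rewrite E.
    apply (is_derive_minus (fun s => 1 / 4 * sin (2 * acos s)) (fun s => 1 / 2 * acos s)).
    + apply is_derive_scal, is_derive_sin_scal_acos, Ht.
    + apply is_derive_scal, is_derive_acos_sin, Ht.
Qed.

(* With [t = acos s] the integral is that of [sin (K t) sin t
   = (cos ((K - 1) t) - cos ((K + 1) t)) / 2] over [[0, PI]]. *)
Lemma RInt_sin_mul_acos_SS (K : nat) : RInt (sin_mul_acos (S (S K))) (-1) 1 = 0.
Proof.
  set (k := INR (S (S K))).
  assert (Hp : INR (S (S (S K))) = k + 1) by (unfold k; rewrite (S_INR (S (S K))); ring).
  assert (Hq : INR (S K) = k - 1) by (unfold k; rewrite (S_INR (S K)); ring).
  assert (Hq0 : 0 < k - 1) by (rewrite <- Hq; apply lt_0_INR; lia).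
  set (G := fun s => 1 / (2 * (k + 1)) * sin ((k + 1) * acos s)
                   - 1 / (2 * (k - 1)) * sin ((k - 1) * acos s)).
  apply is_RInt_unique. replace 0 with (G 1 - G (-1)).
  2:{ unfold G. rewrite acos_1, acos_m1, !Rmult_0_r, sin_0, <- Hp, <- Hq, !sin_INR_mul_PI.
      ring. }
  apply is_RInt_sin_mul_acos; [intros; apply continuous_sin_acos_combination|].
  intros t Ht. pose proof (sin_acos_pos t Ht).
  assert (E : sin_mul_acos (S (S K)) t
    = (1 / (2 * (k - 1)) * (k - 1) * cos ((k - 1) * acos t)
       - 1 / (2 * (k + 1)) * (k + 1) * cos ((k + 1) * acos t)) / sin (acos t)).
  { unfold sin_mul_acos. fold k.
    replace ((k + 1) * acos t) with (k * acos t + acos t) by ring.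
    replace ((k - 1) * acos t) with (k * acos t - acos t) by ring.
    rewrite cos_plus, cos_minus. field. lra. }
  rewrite E. apply is_derive_sin_acos_combination, Ht.
Qed.

Lemma is_PV_sin_mul_acos_0 (x : R) : is_PV (sin_mul_acos 0) x 0.
Proof.
  unfold is_PV. apply filterlim_ext with (fun _ => 0); [|apply filterlim_const].
  intros e.
  rewrite !(RInt_ext (fun s => sin_mul_acos 0 s / (s - x)) (fun _ => 0))
    by (intros; unfold sin_mul_acos; simpl INR; rewrite Rmult_0_l, sin_0;
        unfold Rdiv; apply Rmult_0_l).
  rewrite !RInt_const. unfold scal; simpl; unfold mult; simpl. ring.
Qed.

Lemma is_PV_sin_mul_acos_1 (x : R) : -1 < x < 1 -> is_PV (sin_mul_acos 1) x (- PI * x).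
Proof.
  intros Hx. apply (is_PV_ext (fun s => sqrt (1 - s ^ 2)));
    [exact Hx | | apply is_PV_sqrt_1_sub_sqr, Hx].
  intros s Hs. unfold sin_mul_acos. simpl INR.
  rewrite Rmult_1_l, sin_acos_sqrt by lra. reflexivity.
Qed.

(* From [sin ((K + 2) t) = 2 cos t sin ((K + 1) t) - sin (K t)] with [cos t = s]. *)
Lemma is_PV_sin_mul_acos_SS (K : nat) (x a b : R) : -1 < x < 1 ->
  is_PV (sin_mul_acos K) x a -> is_PV (sin_mul_acos (S K)) x b ->
  is_PV (sin_mul_acos (S (S K))) x (2 * (RInt (sin_mul_acos (S K)) (-1) 1 + x * b) - a).
Proof.
  intros Hx Ha Hb.
  apply (is_PV_ext (fun s => 2 * (s * sin_mul_acos (S K) s) + (-1) * sin_mul_acos K s));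
    [exact Hx | |].
  { intros s Hs. rewrite sin_mul_acos_SS by lra. ring. }
  replace (2 * (RInt (sin_mul_acos (S K)) (-1) 1 + x * b) - a)
    with (2 * (RInt (sin_mul_acos (S K)) (-1) 1 + x * b) + (-1) * a) by ring.
  assert (Hc : forall K s, continuous (sin_mul_acos K) s) by apply continuous_sin_mul_acos.
  apply is_PV_plus; [exact Hx | | | |].
  - intros s. apply (continuous_scal_r 2 (fun s => s * sin_mul_acos (S K) s)).
    apply (continuous_mult (fun s => s) (sin_mul_acos (S K)));
      [apply continuous_id | apply Hc].
  - intros s. apply (continuous_scal_r (-1) (sin_mul_acos K)), Hc.
  - apply is_PV_scal; [exact Hx | |apply is_PV_mul_id; auto].
    intros s. apply (continuous_mult (fun s => s) (sin_mul_acos (S K)));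
      [apply continuous_id | apply Hc].
  - apply is_PV_scal; auto.
Qed.

Lemma is_PV_sin_mul_acos (K : nat) (x : R) : -1 < x < 1 -> (1 <= K)%nat ->
  is_PV (sin_mul_acos K) x (- PI * cos (INR K * acos x)).
Proof.
  intros Hx HK. destruct K as [|K]; [lia|]. clear HK.
  enough (H : is_PV (sin_mul_acos (S K)) x (- PI * cos (INR (S K) * acos x)) /\
              is_PV (sin_mul_acos (S (S K))) x (- PI * cos (INR (S (S K)) * acos x)))
    by apply H.
  set (t := acos x). assert (Hct : cos t = x) by (apply cos_acos; lra).
  induction K as [|K [IH1 IH2]]; split.
  - simpl INR. rewrite Rmult_1_l, Hct. apply is_PV_sin_mul_acos_1, Hx.
  - replace (- PI * cos (INR 2 * t))
      with (2 * (RInt (sin_mul_acos 1) (-1) 1 + x * (- PI * x)) - 0).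
    + apply is_PV_sin_mul_acos_SS; [exact Hx | apply is_PV_sin_mul_acos_0 |].
      apply is_PV_sin_mul_acos_1, Hx.
    + rewrite RInt_sin_mul_acos_1. simpl INR. rewrite cos_2a_cos, Hct. field.
  - exact IH2.
  - replace (- PI * cos (INR (S (S (S K))) * t))
      with (2 * (RInt (sin_mul_acos (S (S K))) (-1) 1 + x * (- PI * cos (INR (S (S K)) * t)))
            - - PI * cos (INR (S K) * t)).
    + apply is_PV_sin_mul_acos_SS; assumption.
    + rewrite RInt_sin_mul_acos_SS.
      replace (INR (S (S (S K))) * t) with (INR (S (S K)) * t + t)
        by (rewrite (S_INR (S (S K))); ring).
      replace (INR (S K) * t) with (INR (S (S K)) * t - t)
        by (rewrite (S_INR (S K)); ring).
      rewrite cos_plus, cos_minus, Hct. ring.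
Qed.

(* Stdlib's [Binomial.C n k] is not [0] for [k > n] (it computes [n! / k!]). *)
Definition binom (n k : nat) : R := if (k <=? n)%nat then Binomial.C n k else 0.

Lemma C_n_0 (n : nat) : Binomial.C n 0 = 1.
Proof.
  unfold Binomial.C. rewrite Nat.sub_0_r. simpl. field. apply INR_fact_neq_0.
Qed.

Lemma C_n_n (n : nat) : Binomial.C n n = 1.
Proof.
  unfold Binomial.C. rewrite Nat.sub_diag. simpl. field. apply INR_fact_neq_0.
Qed.

Lemma binom_C (n k : nat) : (k <= n)%nat -> binom n k = Binomial.C n k.
Proof. intros Hk. unfold binom. rewrite (proj2 (Nat.leb_le k n) Hk). reflexivity. Qed.

Lemma binom_n_0 (n : nat) : binom n 0 = 1.
Proof. rewrite binom_C by lia. apply C_n_0. Qed.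

Lemma binom_n_Sn (n : nat) : binom n (S n) = 0.
Proof. unfold binom. rewrite (proj2 (Nat.leb_gt (S n) n)) by lia. reflexivity. Qed.

Lemma binom_S_S (n k : nat) : binom (S n) (S k) = binom n k + binom n (S k).
Proof.
  destruct (Nat.lt_ge_cases k n) as [Hk | Hk].
  - rewrite !binom_C by lia. symmetry. apply pascal, Hk.
  - destruct (Nat.eq_dec k n) as [-> | Hkn].
    + rewrite binom_n_Sn, !binom_C by lia. rewrite !C_n_n. ring.
    + unfold binom.
      rewrite (proj2 (Nat.leb_gt (S k) (S n))), (proj2 (Nat.leb_gt k n)),
              (proj2 (Nat.leb_gt (S k) n)) by lia.
      ring.
Qed.

Lemma sum_binom_S (u : nat -> R) (N : nat) :
  sum_f_R0 (fun i => binom (S N) i * u i) (S N) =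
  sum_f_R0 (fun i => binom N i * (u i + u (S i))) N.
Proof.
  rewrite (decomp_sum _ (S N)) by lia. simpl Nat.pred.
  rewrite (sum_eq (fun i => binom (S N) (S i) * u (S i))
                  (fun i => binom N i * u (S i) + binom N (S i) * u (S i)))
    by (intros; rewrite binom_S_S; ring).
  rewrite (sum_eq (fun i => binom N i * (u i + u (S i)))
                  (fun i => binom N i * u i + binom N i * u (S i))) by (intros; ring).
  rewrite !plus_sum, !binom_n_0.
  destruct N as [|N].
  - simpl. rewrite binom_n_Sn, binom_n_0. ring.
  - rewrite (decomp_sum (fun i => binom (S N) i * u i) (S N)) by lia. simpl Nat.pred.
    rewrite (tech5 (fun i => binom (S N) (S i) * u (S i)) N), binom_n_Sn, binom_n_0. ring.
Qed.

(* Multiplying by [sin^2 t] acts on [sin b] as a second difference: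
   [sin^2 t sin b = - (sin (b - 2t) - 2 sin b + sin (b + 2t)) / 4]. *)
Lemma sin_mul_sin_pow_even (M : nat) (a t : R) :
  sin (a * t) * sin t ^ (2 * M) =
  (-1 / 4) ^ M * sum_f_R0 (fun j => (-1) ^ j * binom (2 * M) j
                                    * sin ((a - 2 * INR M + 2 * INR j) * t)) (2 * M).
Proof.
  induction M as [|M IH].
  - simpl. rewrite binom_n_0. replace ((a - 2 * 0 + 2 * 0) * t) with (a * t) by ring. ring.
  - replace (2 * S M)%nat with (S (S (2 * M))) by lia.
    replace (sin (a * t) * sin t ^ S (S (2 * M)))
      with (sin (a * t) * sin t ^ (2 * M) * (sin t * sin t)) by (simpl; ring).
    rewrite IH, (sum_eq (fun j => (-1) ^ j * binom (S (S (2 * M))) j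
                                  * sin ((a - 2 * INR (S M) + 2 * INR j) * t))
                        (fun j => binom (S (S (2 * M))) j
                                  * ((-1) ^ j * sin ((a - 2 * INR (S M) + 2 * INR j) * t))))
      by (intros; ring).
    rewrite !sum_binom_S.
    replace ((-1 / 4) ^ S M) with ((-1 / 4) ^ M * (-1 / 4)) by (simpl; ring).
    rewrite !Rmult_assoc, (Rmult_comm (sum_f_R0 _ _) (sin t * sin t)).
    rewrite (scal_sum _ _ (sin t * sin t)), (scal_sum _ _ (-1 / 4)).
    f_equal. apply sum_eq. intros j _.
    set (b := (a - 2 * INR M + 2 * INR j) * t).
    replace ((a - 2 * INR (S M) + 2 * INR j) * t) with (b - 2 * t)
      by (unfold b; rewrite S_INR; ring).
    replace ((a - 2 * INR (S M) + 2 * INR (S j)) * t) with b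
      by (unfold b; rewrite !S_INR; ring).
    replace ((a - 2 * INR (S M) + 2 * INR (S (S j))) * t) with (b + 2 * t)
      by (unfold b; rewrite !S_INR; ring).
    rewrite sin_minus, sin_plus, cos_2a_sin, sin_2a. simpl pow. field.
Qed.

Lemma chebU_mul_sqrt_pow (n M : nat) (s : R) : (2 * M <= n + 1)%nat -> -1 < s < 1 ->
  chebU n s * ((1 - s ^ 2) ^ M * sqrt (1 - s ^ 2)) =
  sum_f_R0 (fun j => (-1 / 4) ^ M * ((-1) ^ j * binom (2 * M) j)
                     * sin_mul_acos (n + 1 - 2 * M + 2 * j) s) (2 * M).
Proof.
  intros HM Hs. set (t := acos s).
  assert (Hsin : 0 < sin t) by (apply sin_acos_pos, Hs).
  assert (Hsq : sqrt (1 - s ^ 2) = sin t) by (symmetry; apply sin_acos_sqrt; lra).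
  assert (Hsq2 : 1 - s ^ 2 = sin t ^ 2) by (rewrite <- Hsq, pow2_sqrt; [ring | nra]).
  unfold chebU. fold t. rewrite Hsq, Hsq2, <- pow_mult.
  replace (sin (INR (n + 1) * t) / sin t * (sin t ^ (2 * M) * sin t))
    with (sin (INR (n + 1) * t) * sin t ^ (2 * M)) by (field; lra).
  rewrite sin_mul_sin_pow_even, scal_sum. apply sum_eq. intros j Hj.
  unfold sin_mul_acos. fold t.
  replace (INR (n + 1 - 2 * M + 2 * j)) with (INR (n + 1) - 2 * INR M + 2 * INR j).
  { ring. }
  rewrite (plus_INR (n + 1 - 2 * M)), minus_INR, !mult_INR by lia. simpl INR. ring.
Qed.

Lemma is_HFP2_ext (D1 D2 : R -> R) (r l : R) :
  (forall s, -1 < s < 1 -> D1 s = D2 s) -> is_HFP2 D1 r l -> is_HFP2 D2 r l.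
Proof.
  intros HD [P [HPV HP]]. exists P. split; [|exact HP].
  intros x Hx. apply (is_PV_ext D1); auto.
Qed.

Lemma is_derive_cos_mul_acos (K : nat) (r : R) : (1 <= K)%nat -> -1 < r < 1 ->
  is_derive (fun x => cos (INR K * acos x)) r (INR K * chebU (K - 1) r).
Proof.
  intros HK Hr. unfold chebU. rewrite Nat.sub_add by exact HK.
  replace (INR K * (sin (INR K * acos r) / sin (acos r)))
    with (INR K * sin (INR K * acos r) / sin (acos r)) by (unfold Rdiv; ring).
  apply is_derive_cos_scal_acos, Hr.
Qed.

(* The principal value is [- PI sum_j a_j T_(K_j)], and [T_K' = K U_(K-1)]. *)
Lemma is_HFP2_sin_mul_acos_sum (a : nat -> R) (K : nat -> nat) (N : nat) (r : R) :
  (forall j, (1 <= K j)%nat) -> -1 < r < 1 ->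
  is_HFP2 (fun s => sum_f_R0 (fun j => a j * sin_mul_acos (K j) s) N) r
    (- PI * sum_f_R0 (fun j => a j * INR (K j) * chebU (K j - 1) r) N).
Proof.
  intros HK Hr.
  exists (fun x => sum_f_R0 (fun j => a j * (- PI * cos (INR (K j) * acos x))) N). split.
  - intros x Hx. apply is_PV_sum; [exact Hx | |].
    + intros j s. apply (continuous_scal_r (a j) (sin_mul_acos (K j))), continuous_sin_mul_acos.
    + intros j _. apply is_PV_scal; [exact Hx | apply continuous_sin_mul_acos |].
      apply is_PV_sin_mul_acos; auto.
  - rewrite scal_sum.
    apply is_derive_ext with
      (fun x => sum_n (fun j => a j * (- PI * cos (INR (K j) * acos x))) N).
    { intros x. apply sum_n_Reals. }
    rewrite <- sum_n_Reals.
    apply (@is_derive_sum_n R_AbsRing R_NormedModule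
             (fun j x => a j * (- PI * cos (INR (K j) * acos x)))).
    intros j _.
    replace (a j * INR (K j) * chebU (K j - 1) r * - PI)
      with (a j * (- PI * (INR (K j) * chebU (K j - 1) r))) by ring.
    apply is_derive_scal, is_derive_scal, is_derive_cos_mul_acos; auto.
Qed.

Theorem mainTheorem4 (m n : nat) (hm : (2 <= m)%nat) (hn : (2 * m - 1 <= n)%nat)
  (r : R) (hr : Rabs r < 1) :
  is_HFP2 (fun s => chebU n s * ((1 - s ^ 2) ^ (m - 1)%nat * sqrt (1 - s ^ 2))) r
    (PI * (-1) ^ m * (1 / 2) ^ (2 * m - 2)%nat *
     sum_f_R0 (fun j => (-1) ^ j * Binomial.C (2 * m - 2)%nat j
                        * INR (n + 3 - 2 * m + 2 * j)%nat
                        * chebU (n + 2 - 2 * m + 2 * j)%nat r) (2 * m - 2)%nat).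
Proof.
  apply Rabs_lt_between in hr.
  destruct m as [|M]; [lia|]. replace (S M - 1)%nat with M by lia.
  replace (2 * S M - 2)%nat with (2 * M)%nat by lia.
  set (a := fun j => (-1 / 4) ^ M * ((-1) ^ j * binom (2 * M) j)).
  set (K := fun j => (n + 1 - 2 * M + 2 * j)%nat).
  apply (is_HFP2_ext (fun s => sum_f_R0 (fun j => a j * sin_mul_acos (K j) s) (2 * M))).
  { intros s Hs. symmetry. apply chebU_mul_sqrt_pow; [lia | exact Hs]. }
  replace (PI * (-1) ^ S M * (1 / 2) ^ (2 * M) * _)
    with (- PI * sum_f_R0 (fun j => a j * INR (K j) * chebU (K j - 1) r) (2 * M)).
  { apply is_HFP2_sin_mul_acos_sum; [intros j; unfold K; lia | lra]. }
  rewrite !scal_sum. apply sum_eq. intros j Hj. unfold a, K.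
  rewrite binom_C by lia.
  replace (n + 1 - 2 * M + 2 * j - 1)%nat with (n + 2 - 2 * S M + 2 * j)%nat by lia.
  replace (n + 1 - 2 * M + 2 * j)%nat with (n + 3 - 2 * S M + 2 * j)%nat by lia.
  replace ((-1 / 4) ^ M) with ((-1) ^ M * (1 / 2) ^ (2 * M))
    by (rewrite pow_mult, <- Rpow_mult_distr; f_equal; field).
  simpl ((-1) ^ S M). ring.
Qed.
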